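(* Let $(x_k)_{k\geq0}$ be a nonnegative, monotone nonincreasing sequence of real numbers, and let $G=\{k\geq 0: x_k/x_{k+1}<2\}$. Then for all $n\geq 0$, \[ \sum_{k\leq n} x_k \leq 3x_0 + 3\sum_{\substack{k\in G\\ k\leq n}} x_{k+1}. \] *)

From HB Require Import structures.
From mathcomp Require Import all_boot all_order all_algebra.
From mathcomp Require Import reals.
Set Implicit Arguments. Unset Strict Implicit. Unset Printing Implicit Defensive.

From HB Require Import structures.
From mathcomp Require Import all_boot all_order all_algebra.
From mathcomp Require Import reals.
From mathcomp Require Import lra.
Import Order.TTheory GRing.Theory Num.Theory.
Local Open Scope ring_scope.

(* Induct on the strengthened bound that carries an extra [2 x m] on the left
   and only [2 x 0] on the right.  Passing from [m] to [m+1] adds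
   [x m + 2 x (m+1) - 2 x m = 2 x (m+1) - x m] to the left, which is at most
   [3 x (m+1)] when [m] is in [G] and nonpositive otherwise, since then
   [x (m+1) <= x m / 2]. *)

Lemma ler_mul_of_ler_div {R : realFieldType} {a b c : R} :
  0 <= b -> 0 < c -> c <= a / b -> c * b <= a.
Proof.
rewrite le_eqVlt => /predU1P[<- c_gt0|b_gt0 _]; last by rewrite ler_pdivlMr.
by rewrite invr0 mulr0 => /(lt_le_trans c_gt0); rewrite ltxx.
Qed.

Lemma twice_le_add_if_ratio_lt2 {R : realFieldType} {a b : R} :
  0 <= b -> b <= a -> 2 * b <= a + 3 * (if a / b < 2 then b else 0).
Proof.
move=> b_ge0 b_le_a; case: ifP => [_|ratio_ge2]; first lra.
have : 2 * b <= a by apply: ler_mul_of_ler_div; rewrite // leNgt ratio_ge2.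
lra.
Qed.

Section NonincreasingSum.

Context {R : realFieldType} {x : nat -> R}.
Hypotheses (x_ge0 : forall k, 0 <= x k) (x_noninc : forall k, x k.+1 <= x k).

Lemma sum_add_twice_le m :
  \sum_(0 <= k < m) x k + 2 * x m <=
  2 * x 0%N + 3 * \sum_(0 <= k < m | x k / x k.+1 < 2) x k.+1.
Proof.
elim: m => [|m IH]; first by rewrite !big_geq // add0r mulr0 addr0.
rewrite big_nat_recr //= [X in _ <= _ + 3 * X]big_mkcond big_nat_recr //=.
rewrite -big_mkcond.
have := twice_le_add_if_ratio_lt2 (x_ge0 m.+1) (x_noninc m).
lra.
Qed.

End NonincreasingSum.

Theorem lemma2p4 (R : realType) (x : nat -> R)
  (x_ge0 : forall k, 0 <= x k)
  (x_noninc : forall k, x k.+1 <= x k) (n : nat) :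
  \sum_(0 <= k < n.+1) x k <=
  3 * x 0%N + 3 * \sum_(0 <= k < n.+1 | x k / x k.+1 < 2) x k.+1.
Proof.
have := sum_add_twice_le x_ge0 x_noninc n.+1.
have := x_ge0 0%N; have := x_ge0 n.+1.
lra.
Qed.
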